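(* Let $n\in\mathbb N$ be even. On $\pm[n]:=\{-n,\ldots,-1,1,\ldots,n\}$ let $$\tau_0=(1,-1)(2,-2)\cdots(n,-n),\qquad \tau_2=(-1,2)(-2,3)\cdots(-(n-1),n)(-n,1),$$ and let $\widetilde{1}_n=(1,2,\ldots,n)(-n,-n+1,\ldots,-1)$. Let $b_1(n)$ be the set of fixed-point-free involutions $\tau_1$ of $\pm[n]$ such that $\#(\tau_2\tau_1)=n$, $\tau_0\tau_1=\tau_1\tau_0$, $\tau_0\tau_1$ is fixed-point free, and there exists $a\in[n]$ with $\tau_1(a)\in[n]$. Let $\mathrm{NC}_2^\delta(n,-n)$ be the set of fixed-point-free involutions $\pi$ of $\pm[n]$ such that: (i) the group $\langle \pi,\widetilde 1_n\rangle$ acts transitively on $\pm[n]$; (ii) $\#(\pi)+\#(\pi^{-1}\widetilde{1}_n)+\#(\widetilde 1_n)=2n+2$; (iii) for no $r\in[n]$ is $(-r,r)$ a cycle of $\pi$; (iv) whenever $(r,s)$ is a cycle of $\pi$, so is $(-s,-r)$. Then the map $\varphi_1:b_1(n)\to\mathrm{NC}_2^\delta(n,-n)$, $\tau_1\mapsto\tau_1\tau_0$, is well defined and is a bijection.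
   Context: Permutations are composed right to left, i.e. $(\sigma\rho)(x)=\sigma(\rho(x))$. For a permutation $\sigma$, $\#(\sigma)$ denotes its number of cycles, with fixed points counted as cycles. $[n]=\{1,\ldots,n\}$. The set $b_1(n)$ is a combinatorial encoding of the non-orientable ribbon graphs of Euler genus $1$ built from one $n$-gon, and $\mathrm{NC}_2^\delta(n,-n)$ is the set of symmetric non-crossing annular pairings of $\pm[n]$. *)

From HB Require Import structures.
From mathcomp Require Import all_boot all_order all_algebra all_fingroup.
Set Implicit Arguments. Unset Strict Implicit. Unset Printing Implicit Defensive.

(* The set  +-[n] = {-n,...,-1,1,...,n}  is encoded as  'I_n * bool :
   (i, false) stands for the integer  i+1   (i.e. an element of [n]),
   (i, true)  stands for the integer -(i+1). *)
Definition pm (n : nat) := ('I_n * bool)%type.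

Definition ival n (x : pm n) : int :=
  if x.2 then (- Posz x.1.+1)%R else Posz x.1.+1.

Definition is_pos n (x : pm n) : bool := ~~ x.2.

(* Paper's composition convention: (s o r)(x) = s (r x).
   MathComp's product (r * s) applies r first, then s. *)
Definition pcomp T (s r : {perm T}) : {perm T} := (r * s)%g.

(* #(s): number of cycles, fixed points counted. *)
Definition ncycles T (s : {perm T}) : nat := #|porbits s|.

Definition fpf_invol T (s : {perm T}) : Prop :=
  forall x, s (s x) = x /\ s x != x.

Definition tau0_fun n (x : pm n) : pm n := (x.1, ~~ x.2).
Lemma tau0_inj n : injective (@tau0_fun n).
Proof. apply: (can_inj (g := @tau0_fun n)) => -[i b] /=; by rewrite /tau0_fun negbK. Qed.
Definition tau0 n : {perm pm n} := perm (@tau0_inj n).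

(* tau2 = (-1,2)(-2,3)...(-(n-1),n)(-n,1) : -(i+1) <-> i+2 (cyclically) *)
Definition tau2_fun n (x : pm n) : pm n :=
  if x.2 then (ordS x.1, false) else (ord_pred x.1, true).
Lemma tau2_inj n : injective (@tau2_fun n).
Proof.
apply: (can_inj (g := @tau2_fun n)) => -[i [|]];
  by rewrite /tau2_fun /= ?ordSK ?ord_predK.
Qed.
Definition tau2 n : {perm pm n} := perm (@tau2_inj n).

(* one_tilde = (1,2,...,n)(-n,-n+1,...,-1):
   k -> k+1 (mod n) on [n];  -k -> -(k-1) on negatives, with -1 -> -n. *)
Definition ot_fun n (x : pm n) : pm n :=
  if x.2 then (ord_pred x.1, true) else (ordS x.1, false).
Definition ot_inv n (x : pm n) : pm n :=
  if x.2 then (ordS x.1, true) else (ord_pred x.1, false).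
Lemma ot_inj n : injective (@ot_fun n).
Proof.
apply: (can_inj (g := @ot_inv n)) => -[i [|]];
  by rewrite /ot_fun /ot_inv /= ?ordSK ?ord_predK.
Qed.
Definition one_tilde n : {perm pm n} := perm (@ot_inj n).

Definition b1 n (t1 : {perm pm n}) : Prop :=
  [/\ fpf_invol t1,
      ncycles (pcomp (tau2 n) t1) = n,
      pcomp (tau0 n) t1 = pcomp t1 (tau0 n),
      (forall x, pcomp (tau0 n) t1 x != x) &
      exists a : pm n, is_pos a /\ is_pos (t1 a)].

Definition NC2delta n (p : {perm pm n}) : Prop :=
  [/\ fpf_invol p,
      (forall x y : pm n, exists2 g, g \in <<[set p; one_tilde n]>>%g & g x = y),
      ncycles p + ncycles (pcomp p^-1%g (one_tilde n)) + ncycles (one_tilde n)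
        = 2 * n + 2,
      (forall r : pm n, is_pos r -> p r != tau0 n r) &
      (forall r s : pm n, p r = s -> p (tau0 n s) = tau0 n r)].

Definition phi1 n (t1 : {perm pm n}) : {perm pm n} := pcomp t1 (tau0 n).

From mathcomp Require Import all_boot all_order all_algebra all_fingroup.
Set Implicit Arguments. Unset Strict Implicit. Unset Printing Implicit Defensive.

(* Since tau0 is an involution, phi1 is a bijection of permutations with inverse
   p |-> p tau0, so the content is that the two lists of conditions match under
   p = tau1 tau0.  Both sides force tau1 to commute with tau0, and then: p is an
   involution iff tau1 is; condition (iii) says that tau1 fixes no negative point,
   hence no point at all; (iv) is automatic.  Since 1~ = tau2 tau0, the permutation
   p^-1 1~ is conjugate to (tau2 tau1)^-1, and as #(p) = n and #(1~) = 2 condition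
   (ii) becomes #(tau2 tau1) = n.  Finally the cycles of 1~ are the two sign
   classes, so <p, 1~> is transitive iff p changes the sign of some point, i.e.
   iff tau1 maps some positive point to a positive point. *)

Section PermCycles.

Variable T : finType.
Implicit Types s h : {perm T}.

Lemma invg_involutive s : involutive s -> s^-1%g = s.
Proof. by move=> sK; apply/permP => x; apply: (@perm_inj _ s); rewrite permKV sK. Qed.

Lemma porbitJ s h x : porbit (s ^ h)%g (h x) = h @: porbit s x.
Proof.
apply/setP => y; apply/porbitP/imsetP => [[k ->]|[z /porbitP[k ->] ->]].
  by exists ((s ^+ k)%g x); rewrite ?mem_porbit // -conjXg permJ.
by exists k; rewrite -conjXg permJ.
Qed.

Lemma ncyclesJ s h : ncycles (s ^ h)%g = ncycles s.
Proof.
rewrite /ncycles.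
have -> : porbits (s ^ h)%g = (fun A : {set T} => h @: A) @: porbits s.
  apply/setP => A; apply/imsetP/imsetP => [[x _ ->]|[_ /imsetP[x _ ->] ->]].
    by exists (porbit s (h^-1%g x)); rewrite ?imset_f //= -porbitJ permKV.
  by exists (h x); rewrite //= porbitJ.
by rewrite card_imset //; apply: imset_inj; apply: perm_inj.
Qed.

Lemma ncyclesV s : ncycles s^-1%g = ncycles s.
Proof. by rewrite /ncycles porbitsV. Qed.

Lemma ncycles_le_card s : ncycles s <= #|T|.
Proof. exact: leq_imset_card. Qed.

Lemma porbits_partition s : partition (porbits s) [set: T].
Proof.
have /orbit_partition : [acts <[s]>%g, on [set: T] | 'P] by apply/actsP => g _ x; rewrite !inE.
rewrite /porbits porbitE; congr partition.
by apply/setP => A; apply/imsetP/imsetP => -[x _ ->]; exists x.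
Qed.

Lemma porbit_involutive s x : involutive s -> porbit s x = [set x; s x].
Proof.
move=> sK; apply/setP => y; rewrite !inE.
apply/porbitP/orP => [[k ->]|[] /eqP ->]; last 2 first.
- by exists 0; rewrite expg0 perm1.
- by exists 1; rewrite expg1.
elim: k => [|k IHk]; first by rewrite expg0 perm1 eqxx; left.
by rewrite expgSr permM; case: IHk => /eqP ->; rewrite ?sK eqxx; [right | left].
Qed.

Lemma ncycles_fpf_invol s : fpf_invol s -> (ncycles s).*2 = #|T|.
Proof.
move=> s_fpf; rewrite -cardsT (card_partition (porbits_partition s)) -muln2.
rewrite -sum_nat_const; apply: eq_bigr => _ /imsetP[x _ ->].
rewrite porbit_involutive => [|y]; last by case: (s_fpf y).
by rewrite cards2 eq_sym; case: (s_fpf x) => _ ->.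
Qed.

End PermCycles.

Section SignedPoints.

Variable n : nat.
Implicit Types (x y z : pm n) (p : {perm pm n}).

Lemma card_pm : #|{: pm n}| = n.*2.
Proof. by rewrite card_prod card_ord card_bool muln2. Qed.

Lemma tau0E x : tau0 n x = (x.1, ~~ x.2).
Proof. by rewrite permE. Qed.

Lemma tau0K : involutive (tau0 n).
Proof. by case=> i b; rewrite !tau0E negbK. Qed.

Lemma tau0V : (tau0 n)^-1%g = tau0 n.
Proof. exact: invg_involutive tau0K. Qed.

Lemma tau2V : (tau2 n)^-1%g = tau2 n.
Proof.
by apply: invg_involutive => -[i [|]]; rewrite !permE /tau2_fun /= ?ordSK ?ord_predK.
Qed.

Lemma one_tildeE x : one_tilde n x = ot_fun x.
Proof. by rewrite permE. Qed.

Lemma one_tilde_tau : one_tilde n = pcomp (tau2 n) (tau0 n).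
Proof. by apply/permP => -[i [|]]; rewrite permM one_tildeE tau0E permE. Qed.

Lemma one_tilde_sign x : (one_tilde n x).2 = x.2.
Proof. by rewrite one_tildeE /ot_fun; case: ifP. Qed.

Lemma one_tildeX_sign k x : ((one_tilde n ^+ k)%g x).2 = x.2.
Proof. by elim: k => [|k IHk]; rewrite ?expg0 ?perm1 // expgSr permM one_tilde_sign. Qed.

Lemma iter_ordS (i : 'I_n) k : val (iter k (@ordS n) i) = (i + k) %% n.
Proof.
elim: k => [|k IHk]; first by rewrite addn0 modn_small.
by rewrite iterS /= IHk addnS -addn1 modnDml addn1.
Qed.

Lemma iter_ordS_onto (i j : 'I_n) : exists k, iter k (@ordS n) i = j.
Proof.
exists (j + n - i); apply: val_inj; rewrite iter_ordS subnKC ?modnDr ?modn_small //.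
exact: leq_trans (ltnW (ltn_ord i)) (leq_addl _ _).
Qed.

Lemma one_tildeX_pos k (i : 'I_n) :
  ((one_tilde n ^+ k)%g (i, false)) = (iter k (@ordS n) i, false).
Proof.
by elim: k => [|k IHk]; rewrite ?expg0 ?perm1 // expgSr permM IHk one_tildeE.
Qed.

Lemma one_tildeX_neg k (i : 'I_n) :
  ((one_tilde n ^+ k)%g (iter k (@ordS n) i, true)) = (i, true).
Proof.
by elim: k => [|k IHk]; rewrite ?expg0 ?perm1 // expgS permM one_tildeE /ot_fun /= ordSK.
Qed.

Lemma one_tilde_reach x y : x.2 = y.2 -> exists k, (one_tilde n ^+ k)%g x = y.
Proof.
case: x y => [i b] [j c] /= <-; case: b.
  by have [k <-] := iter_ordS_onto j i; exists k; apply: one_tildeX_neg.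
by have [k <-] := iter_ordS_onto i j; exists k; apply: one_tildeX_pos.
Qed.

Lemma porbit_one_tilde x : porbit (one_tilde n) x = [set y | y.2 == x.2].
Proof.
apply/setP => y; rewrite inE.
apply/porbitP/eqP => [[k ->]|/esym/one_tilde_reach[k <-]]; last by exists k.
exact: one_tildeX_sign.
Qed.

Lemma ncycles_one_tilde : 0 < n -> ncycles (one_tilde n) = 2.
Proof.
move=> n_gt0; pose i0 := Ordinal n_gt0; rewrite /ncycles.
have -> : porbits (one_tilde n) = [set porbit (one_tilde n) (i0, false);
                                     porbit (one_tilde n) (i0, true)].
  apply/setP => A; rewrite !inE; apply/imsetP/orP => [[x _ ->]|[] /eqP ->].
  - by rewrite !porbit_one_tilde; case: x.2; [right | left].
  - by exists (i0, false).
  - by exists (i0, true).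
rewrite cards2 !porbit_one_tilde; case: eqP => // /setP/(_ (i0, false)).
by rewrite !inE.
Qed.

Lemma ncycles_fpf_invol_pm p : fpf_invol p -> ncycles p = n.
Proof. by move/ncycles_fpf_invol; rewrite card_pm; apply: double_inj. Qed.

Lemma transitive_one_tilde p : 0 < n ->
  (forall x y, exists2 g, g \in <<[set p; one_tilde n]>>%g & g x = y) <->
  exists z, (p z).2 != z.2.
Proof.
move=> n_gt0; set G := <<_>>%g.
have p_in : p \in G by rewrite mem_gen // !inE eqxx.
have ot_in : one_tilde n \in G by rewrite mem_gen // !inE eqxx orbT.
split=> [G_trans | [z p_z] x y].
  have [/existsP[z p_z]|/existsPn p_sign] := boolP [exists z, (p z).2 != z.2].
    by exists z.
  pose i0 := Ordinal n_gt0.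
  have G_sign : G \subset 'N([set y | y.2] | 'P)%g.
    rewrite gen_subG; apply/subsetP => g /set2P[] -> ; apply/astabsP => y /=.
      by rewrite !inE /aperm; move/negPn/eqP: (p_sign y) ->.
    by rewrite !inE /aperm one_tilde_sign.
  have [g g_in g_i0] := G_trans (i0, false) (i0, true).
  have := astabsP (subsetP G_sign g g_in) (i0, false).
  by rewrite /= /aperm g_i0 !inE.
have [/one_tilde_reach[k <-]|x_y] := eqVneq x.2 y.2.
  by exists (one_tilde n ^+ k)%g; rewrite ?groupX.
(* One of the steps z -> p z and p z -> z leads from the sign of x to that of y. *)
have [g [u [g_in x_u gu_y]]] : exists g u, [/\ g \in G, x.2 = u.2 & (g u).2 = y.2].
  have [x_z|x_z] := eqVneq x.2 z.2.
    exists p, z; split=> //.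
    by move: x_y p_z; rewrite x_z; case: (p z).2; case: y.2; case: z.2.
  exists p^-1%g, (p z); rewrite groupV permK; split=> //.
    by move: x_z p_z; case: (p z).2; case: x.2; case: z.2.
  by move: x_y x_z; case: y.2; case: x.2; case: z.2.
have [i ot_i] := one_tilde_reach x_u; have [j ot_j] := one_tilde_reach gu_y.
exists (one_tilde n ^+ i * g * one_tilde n ^+ j)%g; first by rewrite !groupM ?groupX.
by rewrite !permM ot_i ot_j.
Qed.

Lemma ncycles_sum_fpf_invol p : 0 < n -> fpf_invol p ->
  ncycles p + ncycles (pcomp p^-1%g (one_tilde n)) + ncycles (one_tilde n) = 2 * n + 2
  <-> ncycles (pcomp p^-1%g (one_tilde n)) = n.
Proof.
move=> n_gt0 /ncycles_fpf_invol_pm ->; rewrite ncycles_one_tilde // mul2n -addnn.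
by split=> [/addIn/addnI | ->].
Qed.

Lemma phi1E (t1 : {perm pm n}) x : phi1 t1 x = t1 (tau0 n x).
Proof. exact: permM. Qed.

Lemma phi1_tau0M p : phi1 (tau0 n * p)%g = p.
Proof. by rewrite /phi1 /pcomp mulgA -{1}tau0V mulVg mul1g. Qed.

Lemma ncycles_phi1_one_tilde (t1 : {perm pm n}) :
  ncycles (pcomp (phi1 t1)^-1%g (one_tilde n)) = ncycles (pcomp (tau2 n) t1).
Proof.
have -> : pcomp (phi1 t1)^-1%g (one_tilde n) = ((pcomp (tau2 n) t1)^-1 ^ tau0 n)%g.
  by rewrite /phi1 one_tilde_tau /pcomp /conjg !invMg tau0V tau2V !mulgA.
by rewrite ncyclesJ ncyclesV.
Qed.

Lemma phi1_tau0_sym (t1 : {perm pm n}) : involutive t1 ->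
  forall r s, phi1 t1 r = s -> phi1 t1 (tau0 n s) = tau0 n r.
Proof. by move=> t1K r s <-; rewrite !phi1E tau0K t1K. Qed.

Lemma NC2delta_commute (t1 : {perm pm n}) : NC2delta (phi1 t1) -> commute t1 (tau0 n).
Proof.
case=> p_fpf _ _ _ p_sym; apply/permP => x; rewrite !permM.
have t1E y : t1 y = phi1 t1 (tau0 n y) by rewrite phi1E tau0K.
rewrite !t1E tau0K (p_sym (phi1 t1 x) x) ?tau0K //.
by case: (p_fpf x).
Qed.

End SignedPoints.

Section CommutingWithTau0.

Variables (n : nat) (t1 : {perm pm n}).
Hypothesis t1_tau0 : commute t1 (tau0 n).
Implicit Types x z : pm n.

Lemma tau0_t1 x : tau0 n (t1 x) = t1 (tau0 n x).
Proof. by rewrite -permM t1_tau0 permM. Qed.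

Lemma phi1_involutive : involutive (phi1 t1) <-> involutive t1.
Proof.
have phi1_sqr x : phi1 t1 (phi1 t1 x) = t1 (t1 x) by rewrite !phi1E tau0_t1 tau0K.
by split=> t1K x; rewrite ?phi1_sqr // -phi1_sqr.
Qed.

Lemma phi1_pos_tau0 :
  (forall r, is_pos r -> phi1 t1 r != tau0 n r) <-> (forall x, t1 x != x).
Proof.
split=> [p_r | t1_x r _]; last by rewrite phi1E t1_x.
have neg x : x.2 -> t1 x != x.
  by move=> x_neg; move: (p_r (tau0 n x)); rewrite phi1E tau0K /is_pos tau0E x_neg; apply.
move=> x; case x_neg: x.2; first exact: neg.
apply: contra (neg (tau0 n x) _) => [/eqP t1x|]; first by rewrite -tau0_t1 t1x.
by rewrite tau0E x_neg.
Qed.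

Lemma phi1_sign_change : involutive t1 ->
  (exists z, (phi1 t1 z).2 != z.2) <-> exists a, is_pos a /\ is_pos (t1 a).
Proof.
move=> t1K; have pK := phi1_involutive.2 t1K.
split=> [[z p_z] | [a [a_pos t1a_pos]]]; last first.
  exists (tau0 n a); rewrite phi1E tau0K tau0E /=.
  by move: a_pos t1a_pos; rewrite /is_pos; case: (t1 a).2; case: a.2.
wlog z_neg : z p_z / z.2.
  move=> neg_case; case: (boolP z.2) => [|z_pos]; first exact: neg_case.
  apply: (neg_case (phi1 t1 z)); first by rewrite pK eq_sym.
  by move: p_z; rewrite (negbTE z_pos); case: (phi1 t1 z).2.
exists (tau0 n z); rewrite -phi1E /is_pos tau0E z_neg.
by move: p_z; rewrite z_neg; case: (phi1 t1 z).2.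
Qed.

Lemma b1_NC2delta : b1 t1 <-> NC2delta (phi1 t1).
Proof.
have p_fix x : (pcomp (tau0 n) t1 x != x) = (phi1 t1 x != x).
  by rewrite /phi1 /pcomp t1_tau0.
split.
  case=> t1_fpf t1_cycles _ p_fix_free [a [a_pos t1a_pos]].
  have t1K : involutive t1 by move=> x; case: (t1_fpf x).
  have n_gt0 : 0 < n := leq_ltn_trans (leq0n _) (ltn_ord a.1).
  have p_fpf : fpf_invol (phi1 t1).
    by move=> x; rewrite -p_fix; split=> //; apply: (phi1_involutive.2 t1K).
  split=> //.
  - by apply/transitive_one_tilde/phi1_sign_change => //; exists a.
  - by apply/ncycles_sum_fpf_invol; rewrite ?ncycles_phi1_one_tilde.
  - by apply/phi1_pos_tau0 => x; case: (t1_fpf x).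
  - exact: phi1_tau0_sym.
case=> p_fpf p_trans p_cycles p_pos_tau0 _.
have t1K : involutive t1 by apply/phi1_involutive => x; case: (p_fpf x).
have n_gt0 : 0 < n.
  rewrite lt0n; apply/negP => /eqP n0; move: p_cycles.
  have ncycles0 (s : {perm pm n}) : ncycles s = 0.
    by apply/eqP; rewrite -leqn0 -[0]/(0.*2) -n0 -card_pm; apply: ncycles_le_card.
  by rewrite !ncycles0 n0.
split=> //.
- by move=> x; split; [apply: t1K | apply: (phi1_pos_tau0.1 p_pos_tau0)].
- by rewrite -ncycles_phi1_one_tilde; apply/ncycles_sum_fpf_invol.
- by move=> x; rewrite p_fix; case: (p_fpf x).
- by apply/phi1_sign_change/transitive_one_tilde.
Qed.

End CommutingWithTau0.

Theorem proposition5 (n : nat) : ~~ odd n ->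
  (forall t1 : {perm pm n}, b1 t1 -> NC2delta (phi1 t1)) /\
  (forall t1 t1' : {perm pm n}, b1 t1 -> b1 t1' -> phi1 t1 = phi1 t1' -> t1 = t1') /\
  (forall p : {perm pm n}, NC2delta p -> exists2 t1, b1 t1 & phi1 t1 = p).
Proof.
move=> _; split; [|split].
- by move=> t1 t1_b1; apply/b1_NC2delta => //; case: t1_b1.
- by move=> t1 t1' _ _; apply: mulgI.
- move=> p p_NC; exists (tau0 n * p)%g; last exact: phi1_tau0M.
  have t1_NC : NC2delta (phi1 (tau0 n * p)%g) by rewrite phi1_tau0M.
  exact/(b1_NC2delta (NC2delta_commute t1_NC)).
Qed.
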